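(* Let $X$ be a $\mathbb{Z}^n$-periodic discrete metric space with $N$ orbits and let $p\in[1,\infty]$. Then the map $A\mapsto UAU^{-1}$ is an isomorphism of Banach algebras from $\mathcal{A}_p(X)$ onto $\mathcal{A}_p(\mathbb{Z}^n,\mathbb{C}^N)$.
   Context: A discrete metric space is a countable set $X$ with a metric $\rho$ such that every ball is finite. It is $\mathbb{Z}^n$-periodic if $\mathbb{Z}^n$ acts on $X$ by $\rho$-isometries, $(\alpha,x)\mapsto\alpha\cdot x$ (with $0\cdot x=x$, $(\alpha+\beta)\cdot x=\alpha\cdot(\beta\cdot x)$), freely, with finitely many orbits; $x_1,\dots,x_N$ are fixed orbit representatives. $U:l^p(X)\to l^p(\mathbb{Z}^n,\mathbb{C}^N)$, $(Uf)(\alpha)=(f(\alpha\cdot x_1),\dots,f(\alpha\cdot x_N))$. A band operator on $l^p(X)$ is a linear operator $A$ with bounded generating function $k_A$ (i.e. $(Au)(x)=\sum_y k_A(x,y)u(y)$ for finitely supported $u$) such that $k_A(x,y)=0$ whenever $\rho(x,y)>R$ for some $R$. $\mathcal{A}_p(X)$ is the closure in $\mathcal{L}(l^p(X))$ of the band operators. A band operator on $l^p(\mathbb{Z}^n,\mathbb{C}^N)$ is an operator $\sum_{|\alpha|\le m}a_\alpha V_\alpha$ with $a_\alpha\in l^\infty(\mathbb{Z}^n,\mathbb{C}^{N\times N})$ acting by multiplication and $(V_\alpha u)(x)=u(x-\alpha)$; $\mathcal{A}_p(\mathbb{Z}^n,\mathbb{C}^N)$ is the closure of these in $\mathcal{L}(l^p(\mathbb{Z}^n,\mathbb{C}^N))$.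 *)

From mathcomp Require Import all_boot all_order all_algebra.
From mathcomp Require Import all_classical all_reals all_analysis.
From mathcomp Require Import complex.
Set Implicit Arguments. Unset Strict Implicit. Unset Printing Implicit Defensive.
Import Order.TTheory GRing.Theory Num.Theory.
Local Open Scope classical_set_scope.
Local Open Scope ring_scope.

Section Defs.
Variable R : realType.
Local Notation C := (R[i]).
Local Notation normc := (@Normc.normc R).

Definition lpnorm (I : choiceType) (p : \bar R) (f : I -> C) : \bar R :=
  match p with
  | +oo%E => ereal_sup ([set 0%E] `|` [set (normc (f i))%:E | i in [set: I]])
  | (r%:E)%E => poweR (\esum_(i in [set: I]) ((normc (f i)) `^ r)%:E)%E r^-1
  | -oo%E => +oo%E
  end.

Definition in_lp (I : choiceType) (p : \bar R) (f : I -> C) : Prop :=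
  (lpnorm p f < +oo)%E.

Definition opnorm (I J : choiceType) (p : \bar R) (A : (I -> C) -> (J -> C))
  : \bar R :=
  ereal_sup ([set 0%E] `|` [set lpnorm p (A f) | f in [set f | (lpnorm p f <= 1)%E]]).

(* A is (the restriction to l^p(I) of) an element of L(l^p(I)):
   linear on l^p, maps l^p to l^p, and bounded. *)
Definition bounded_op (I : choiceType) (p : \bar R) (A : (I -> C) -> (I -> C))
  : Prop :=
  [/\ (forall f g, in_lp p f -> in_lp p g ->
         A (fun i => f i + g i) = (fun i => A f i + A g i)),
      (forall (c : C) f, in_lp p f -> A (fun i => c * f i) = (fun i => c * A f i)),
      (forall f, in_lp p f -> in_lp p (A f)) &
      (opnorm p A < +oo)%E].

Definition opsub (I J : Type) (A B : (I -> C) -> (J -> C)) : (I -> C) -> (J -> C) :=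
  fun f j => A f j - B f j.

Definition op_closure (I : choiceType) (p : \bar R)
  (S : ((I -> C) -> (I -> C)) -> Prop) (A : (I -> C) -> (I -> C)) : Prop :=
  bounded_op p A /\
  forall eps : R, 0 < eps ->
    exists B, S B /\ (opnorm p (opsub A B) < eps%:E)%E.

Definition is_metric (X : Type) (rho : X -> X -> R) : Prop :=
  [/\ (forall x y, 0 <= rho x y),
      (forall x y, rho x y = 0 <-> x = y),
      (forall x y, rho x y = rho y x) &
      (forall x y z, rho x z <= rho x y + rho y z)].

Definition balls_finite (X : Type) (rho : X -> X -> R) : Prop :=
  forall (x : X) (r : R), finite_set [set y | rho x y <= r].

Definition Zn (n : nat) := 'rV[int]_n.

Definition periodic_action (n : nat) (X : Type) (rho : X -> X -> R)
  (act : Zn n -> X -> X) : Prop :=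
  [/\ (forall x, act 0 x = x),
      (forall a b x, act (a + b) x = act a (act b x)),
      (forall a x y, rho (act a x) (act a y) = rho x y) &
      (forall a x, act a x = x -> a = 0)].

Definition orbit_reps (n N : nat) (X : Type) (act : Zn n -> X -> X)
  (reps : 'I_N -> X) : Prop :=
  (forall x, exists (a : Zn n) (j : 'I_N), act a (reps j) = x) /\
  (forall (a : Zn n) (i j : 'I_N), act a (reps i) = reps j -> i = j).

(* A band operator on l^p(X): a bounded linear operator given by a bounded
   generating function k with band width r:  (Au)(x) = sum_y k(x,y) u(y)
   (the sum is finite, as k(x,.) vanishes outside the finite ball B(x,r)). *)
Definition band_op_X (X : choiceType) (rho : X -> X -> R) (p : \bar R)
  (A : (X -> C) -> (X -> C)) : Prop :=
  bounded_op p A /\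
  exists (k : X -> X -> C) (M r : R),
    [/\ (forall x y, normc (k x y) <= M),
        (forall x y, r < rho x y -> k x y = 0) &
        (forall u, in_lp p u ->
           A u = (fun x => \sum_(y \in [set y | rho x y <= r]) k x y * u y))].

Definition Ap_X (X : choiceType) (rho : X -> X -> R) (p : \bar R) :=
  op_closure p (band_op_X rho p).

(* A function Z^n -> C^N is represented (curried form) as a function on
   Z^n * 'I_N; its l^p norm is (sum_alpha sum_j |u(alpha)_j|^p)^(1/p),
   resp. sup_{alpha, j} |u(alpha)_j|. *)

Definition box (n m : nat) : set (Zn n) :=
  [set a | forall k : 'I_n, (`|a ord0 k| <= m)%N].

(* band operator  sum_{|alpha| <= m} a_alpha V_alpha  with
   a_alpha in l^oo(Z^n, C^{N x N}) and (V_alpha u)(x) = u(x - alpha) *)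
Definition band_op_Z (n N : nat) (p : \bar R)
  (B : (Zn n * 'I_N -> C) -> (Zn n * 'I_N -> C)) : Prop :=
  exists (m : nat) (a : Zn n -> Zn n -> 'M[C]_N),
    (forall alpha, exists M : R, forall x i j, normc (a alpha x i j) <= M) /\
    (forall u, in_lp p u ->
       B u = (fun xi => \sum_(alpha \in @box n m)
                          \sum_(j < N) a alpha xi.1 xi.2 j * u (xi.1 - alpha, j))).

Definition Ap_Z (n N : nat) (p : \bar R) :=
  op_closure p (@band_op_Z n N p).

Definition Uop (n N : nat) (X : Type) (act : Zn n -> X -> X) (reps : 'I_N -> X)
  (f : X -> C) : Zn n * 'I_N -> C :=
  fun aj => f (act aj.1 (reps aj.2)).

(* U^{-1} g (alpha . x_j) = g(alpha)_j *)
Definition Uinv (n N : nat) (X : Type) (act : Zn n -> X -> X) (reps : 'I_N -> X)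
  (g : Zn n * 'I_N -> C) : X -> C :=
  fun x => match pselect (exists aj : Zn n * 'I_N, act aj.1 (reps aj.2) = x) with
           | left H => g (proj1_sig (cid H))
           | right _ => 0
           end.

Definition conjU (n N : nat) (X : Type) (act : Zn n -> X -> X) (reps : 'I_N -> X)
  (A : (X -> C) -> (X -> C)) : (Zn n * 'I_N -> C) -> (Zn n * 'I_N -> C) :=
  fun g => Uop act reps (A (Uinv act reps g)).

End Defs.

From mathcomp Require Import all_boot all_order all_algebra.
From mathcomp Require Import all_classical all_reals all_analysis.
From mathcomp Require Import complex.
From mathcomp Require Import lra zify.
Set Implicit Arguments. Unset Strict Implicit. Unset Printing Implicit Defensive.
Import Order.TTheory GRing.Theory Num.Theory.
Local Open Scope classical_set_scope.
Local Open Scope ring_scope.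

(* Since the action is free and the [x_j] represent the orbits, [(alpha, j) |-> alpha . x_j]
   is a bijection onto X; hence U is a linear isometry of l^p(X) onto l^p(Z^n, C^N), and
   conjugation by U is a unital algebra isomorphism preserving operator norms.  It maps band
   operators to band operators: the coefficient [k (beta . x_i, (beta - alpha) . x_j)] of the
   shift by alpha vanishes unless [rho (alpha . x_i, x_j) <= r], by invariance of rho, and as
   balls are finite this confines alpha to a box.  Conversely, shifts by alpha in a box move
   points a bounded rho-distance.  Norm preservation then carries closures to closures. *)

Section FiniteSets.

Lemma finite_set_ubound d (O : orderType d) (T : choiceType) (U : Type) (x0 : O)
    (S : set T) (f : T -> U -> O) :
  finite_set S -> (forall s, S s -> exists M, forall u, (f s u <= M)%O) ->
  exists M, forall s, S s -> forall u, (f s u <= M)%O.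
Proof.
move=> /finite_fsetP[F ->] f_bd.
suff seq_ubound (s : seq T) : (forall y, y \in s -> exists M, forall u, (f y u <= M)%O) ->
    exists M, forall y, y \in s -> forall u, (f y u <= M)%O.
  by have [//|M HM] := seq_ubound (finmap.enum_fset F); exists M.
elim: s => [|x s IH] s_bd; first by exists x0.
have [M1 HM1] := s_bd x (mem_head _ _).
have [|M2 HM2] := IH; first by move=> y ys; apply: s_bd; rewrite in_cons ys orbT.
exists (Order.max M1 M2) => y; rewrite in_cons => /predU1P[-> | ys] u.
  by rewrite le_max HM1.
by rewrite le_max HM2 ?orbT.
Qed.

Lemma box_finite n m : finite_set (@box n m).
Proof.
pose e (t : {ffun 'I_n -> 'I_(m + m).+1}) : Zn n := \row_k ((t k : nat)%:Z - m%:Z)%R.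
apply: (@sub_finite_set _ _ (e @` setT)); last exact: finite_image finite_finset.
move=> a am; exists [ffun k => inord `|(a ord0 k + m%:Z)%R|%N] => //.
apply/rowP => k; rewrite mxE ffunE inordK; have := am k; rewrite /=.
  move=> h; have -> : a 0 k = a ord0 k by congr (a _ k); apply: val_inj.
  lia.
by move=> h; lia.
Qed.

Lemma finite_subset_box n (S : set (Zn n)) : finite_set S -> exists m, S `<=` @box n m.
Proof.
move=> Sfin; have [|m Hm] := @finite_set_ubound _ nat _ _ 0%N S
  (fun a k => `|a ord0 k|%N) Sfin.
  by move=> a _; exists (\max_(k < n) `|a ord0 k|%N) => k; exact: leq_bigmax.
by exists m => a Sa k; exact: Hm.
Qed.

Lemma big_fsbigT (V : eqType) (idx : V) (op : Monoid.com_law idx) (T : finType) (F : T -> V) :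
  \big[op/idx]_(j : T) F j = \big[op/idx]_(j \in [set: T]) F j.
Proof.
rewrite (fsbig_fwiden (index_enum T)) //.
- by move=> j _; rewrite /= mem_index_enum.
- by rewrite /index_enum -enumT enum_uniq.
- by move=> j [_ []].
Qed.

Lemma eq_fsbigl_supp (V : Type) (idx : V) (op : Monoid.com_law idx) (T : choiceType)
    (P Q : set T) (F : T -> V) :
  (forall y, P y -> ~ Q y -> F y = idx) -> (forall y, Q y -> ~ P y -> F y = idx) ->
  \big[op/idx]_(y \in P) F y = \big[op/idx]_(y \in Q) F y.
Proof.
move=> FP FQ; rewrite (fsbig_widen P (P `|` Q) F) => [||y]; last 2 first.
- by move=> y Py; left.
- by case=> [[Py|Qy] nPy] //; apply: FQ.
rewrite [RHS](fsbig_widen Q (P `|` Q) F) // => y [[Py|Qy] nQy] //.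
exact: FP.
Qed.

End FiniteSets.

Section Operators.
Variable R : realType.
Local Notation C := (R[i]).
Local Notation normc := (@Normc.normc R).

Lemma normc_ge0 (z : C) : 0 <= normc z.
Proof. exact: (@normr_ge0 _ (Rcomplex R)). Qed.

Lemma normc_real (x : R) : normc x%:C%C = `|x|.
Proof. by rewrite /= expr0n /= addr0 sqrtr_sqr. Qed.

Section LpNorm.
Local Open Scope ereal_scope.

Lemma lpnorm_ge0 (I : choiceType) p (f : I -> C) : 0 <= lpnorm p f.
Proof.
case: p => [r||] //=; first exact: poweR_ge0.
by apply: ereal_sup_ubound; left.
Qed.

Lemma lpnorm_reindex (I J : choiceType) (e : I -> J) p (f : J -> C) :
  set_bij setT setT e -> lpnorm p (f \o e) = lpnorm p f.
Proof.
move=> e_bij; case: p => [r||] //=; first by rewrite (reindex_esum _ _ e _ e_bij).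
congr ereal_sup; congr setU; apply/seteqP; split => _ [i _ <-].
  by exists (e i).
by case: e_bij => _ _ /(_ i Logic.I) [j _ <-]; exists j.
Qed.

Lemma esumZ_le (I : choiceType) (S : set I) (c : R) (a : I -> \bar R) :
  (0 <= c)%R -> (forall i, 0 <= a i) ->
  \esum_(i in S) (c%:E * a i) <= c%:E * \esum_(i in S) a i.
Proof.
move=> c0 a0; apply: ge_ereal_sup => _ [F FS <-].
rewrite -ge0_mule_fsumr //; apply: lee_wpmul2l; first by rewrite lee_fin.
by apply: ereal_sup_ubound; exists F.
Qed.

Lemma normc_le_lpnorm_infty (I : choiceType) (f : I -> C) i :
  (normc (f i))%:E <= lpnorm +oo f.
Proof. by apply: ereal_sup_ubound; right; exists i. Qed.

Lemma lpnormZ_le (I : choiceType) p (c : C) (f : I -> C) : 1 <= p ->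
  lpnorm p (fun i => (c * f i)%R) <= (normc c)%:E * lpnorm p f.
Proof.
case: p => [r||] // r1 /=; last first.
  apply: ge_ereal_sup => _ [/= -> | [i _ <-]].
    apply: mule_ge0; first by rewrite lee_fin normc_ge0.
    by apply: ereal_sup_ubound; left.
  rewrite /= Normc.normcM EFinM; apply: lee_wpmul2l; first by rewrite lee_fin normc_ge0.
  exact: normc_le_lpnorm_infty.
have r0 : (0 < r)%R by apply: (@lt_le_trans _ _ 1%R) => //; rewrite -lee_fin.
have sum_ge0 : 0 <= \esum_(i in setT) (normc (f i) `^ r)%:E.
  by apply: esum_ge0 => i _; rewrite lee_fin powR_ge0.
under eq_esum do rewrite Normc.normcM powRM ?normc_ge0 // EFinM.
apply: (@le_trans _ _ (((normc c `^ r)%:E * \esum_(i in setT) (normc (f i) `^ r)%:E) `^ r^-1)).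
  apply: gt0_ler_poweR; first by rewrite invr_ge0 ltW.
  all: rewrite ?in_itv /= ?leey ?andbT.
  - by apply: esum_ge0 => i _; rewrite mule_ge0 // lee_fin powR_ge0.
  - by rewrite mule_ge0 ?lee_fin ?powR_ge0.
  - by apply: esumZ_le => [|i]; rewrite ?lee_fin powR_ge0.
rewrite poweRM ?lee_fin ?powR_ge0 // poweR_EFin -powRrM mulfV ?gt_eqF //.
by rewrite powRr1 ?normc_ge0.
Qed.

Lemma powR_le_sum (x y z r : R) : (0 <= x)%R -> (0 <= y)%R -> (0 <= z)%R ->
  (0 <= r)%R -> (z <= x + y)%R -> (z `^ r <= 2 `^ r * (x `^ r + y `^ r))%R.
Proof.
wlog xy : x y / (x <= y)%R.
  move=> W x0 y0 z0 r0 zxy; have [xy|yx] := leP x y; first exact: W.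
  by rewrite addrC; apply: W => //; [exact: ltW | rewrite addrC].
move=> x0 y0 z0 r0 zxy.
have : (z `^ r <= (2 * y) `^ r)%R.
  apply: ge0_ler_powR => //; rewrite ?nnegrE ?mulr_ge0 //.
  by apply: (le_trans zxy); rewrite mulr2n mulrDl mul1r lerD2r.
rewrite powRM // => /le_trans; apply.
have := powR_ge0 2 r; have := powR_ge0 x r; nra.
Qed.

Lemma poweRV_le (S : \bar R) (a r : R) : (0 < r)%R -> (0 <= a)%R -> 0 <= S ->
  poweR S r^-1 <= a%:E -> S <= (a `^ r)%:E.
Proof.
move=> r0 a0 S0 Sa.
have := @gt0_ler_poweR R r (ltW r0) (poweR S r^-1) a%:E.
rewrite !in_itv /= !leey !andbT poweR_ge0 lee_fin a0 => /(_ isT isT Sa).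
by rewrite -poweRrM mulVf ?gt_eqF // poweRe1 // poweR_EFin.
Qed.

(* No triangle inequality is needed: [|g - h|^r <= 2^r (|g|^r + |h|^r)] pointwise suffices. *)
Lemma lpnormB_ubound (I : choiceType) p (a : R) : 1 <= p -> (0 <= a)%R ->
  exists K : R, forall g h : I -> C, lpnorm p g <= a%:E -> lpnorm p h <= a%:E ->
    lpnorm p (fun i => (g i - h i)%R) <= K%:E.
Proof.
case: p => [r||] // r1 a0; last first.
  exists (a + a)%R => g h ga ha; apply: ge_ereal_sup => _ [/= -> | [i _ <-]].
    by rewrite lee_fin addr_ge0.
  rewrite lee_fin; apply: (le_trans (le_normcD _ _)); rewrite normcN.
  apply: lerD; rewrite -lee_fin.
    exact: le_trans (normc_le_lpnorm_infty g i) ga.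
  exact: le_trans (normc_le_lpnorm_infty h i) ha.
have r0 : (0 < r)%R by apply: (@lt_le_trans _ _ 1%R) => //; rewrite -lee_fin.
have sum_ge0 (f : I -> C) : 0 <= \esum_(i in setT) (normc (f i) `^ r)%:E.
  by apply: esum_ge0 => i _; rewrite lee_fin powR_ge0.
exists ((2 `^ r * (a `^ r + a `^ r)) `^ r^-1)%R => g h ga ha /=.
rewrite -poweR_EFin; apply: gt0_ler_poweR; first by rewrite invr_ge0 ltW.
- by rewrite in_itv /= leey andbT.
- by rewrite in_itv /= leey andbT lee_fin mulr_ge0 ?addr_ge0 ?powR_ge0.
apply: (@le_trans _ _ (\esum_(i in setT)
    ((2 `^ r)%:E * ((normc (g i) `^ r)%:E + (normc (h i) `^ r)%:E)))).
  apply: le_esum => i _; rewrite -EFinD -EFinM lee_fin.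
  apply: powR_le_sum; rewrite ?normc_ge0 ?(ltW r0) //.
  by apply: (le_trans (le_normcD _ _)); rewrite normcN.
apply: le_trans; first by apply: esumZ_le => [|i]; rewrite ?adde_ge0 ?lee_fin ?powR_ge0.
rewrite esumD => [|i _|i _]; rewrite ?lee_fin ?powR_ge0 //.
rewrite EFinM EFinD; apply: lee_wpmul2l; first by rewrite lee_fin powR_ge0.
by apply: leeD; apply: poweRV_le.
Qed.

Lemma in_lp_fin (I : choiceType) p (f : I -> C) : in_lp p f ->
  exists l : R, lpnorm p f = l%:E /\ (0 <= l)%R.
Proof.
rewrite /in_lp; have := lpnorm_ge0 p f.
by case: (lpnorm p f) => [l||] // l0 _; exists l.
Qed.

Lemma in_lpZ (I : choiceType) p (c : C) (f : I -> C) : 1 <= p -> in_lp p f ->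
  in_lp p (fun i => (c * f i)%R).
Proof.
move=> p1 /in_lp_fin[l [fl _]]; rewrite /in_lp.
by apply: (le_lt_trans (lpnormZ_le _ _ p1)); rewrite fl -EFinM ltry.
Qed.

Lemma in_lpB (I : choiceType) p (g h : I -> C) : 1 <= p -> in_lp p g -> in_lp p h ->
  in_lp p (fun i => (g i - h i)%R).
Proof.
move=> p1 /in_lp_fin [lg [gl g0]] /in_lp_fin [lh [hl h0]].
have [|K HK] := @lpnormB_ubound I p (Num.max lg lh) p1; first by rewrite le_max g0.
apply: (le_lt_trans (HK _ _ _ _)); rewrite ?ltry //.
- by rewrite gl lee_fin le_max lexx.
- by rewrite hl lee_fin le_max lexx orbT.
Qed.

Lemma in_lpD (I : choiceType) p (g h : I -> C) : 1 <= p -> in_lp p g -> in_lp p h ->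
  in_lp p (fun i => (g i + h i)%R).
Proof.
move=> p1 gp hp.
have -> : (fun i => (g i + h i)%R) = (fun i => (g i - (fun i => -1 * h i) i)%R).
  by apply/funext => i /=; rewrite mulN1r opprK.
by apply: in_lpB => //; apply: in_lpZ.
Qed.

End LpNorm.

Section OpNorm.
Local Open Scope ereal_scope.

Lemma opnorm_ge0 (I J : choiceType) p (A : (I -> C) -> (J -> C)) : 0 <= opnorm p A.
Proof. by apply: ereal_sup_ubound; left. Qed.

Lemma lpnorm_le_opnorm (I J : choiceType) p (A : (I -> C) -> (J -> C)) f :
  lpnorm p f <= 1 -> lpnorm p (A f) <= opnorm p A.
Proof. by move=> f1; apply: ereal_sup_ubound; right; exists f. Qed.

Lemma opnorm_le (I J : choiceType) p (A : (I -> C) -> (J -> C)) (K : R) :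
  (0 <= K)%R -> (forall f, lpnorm p f <= 1 -> lpnorm p (A f) <= K%:E) ->
  opnorm p A <= K%:E.
Proof.
by move=> K0 AK; apply: ge_ereal_sup => _ [/= -> | [f f1 <-]]; [rewrite lee_fin | exact: AK].
Qed.

(* Rescale [f] into the unit ball: [A f = (l + 1) A ((l + 1)^-1 f)] with [l = |f|_p]. *)
Lemma in_lp_of_ubound (I : choiceType) p (A : (I -> C) -> (I -> C)) (K : R) :
  1 <= p -> (forall c f, in_lp p f -> A (fun i => c * f i)%R = (fun i => c * A f i)%R) ->
  (forall f, lpnorm p f <= 1 -> lpnorm p (A f) <= K%:E) ->
  forall f, in_lp p f -> in_lp p (A f).
Proof.
move=> p1 AZ AK f fp; have [l [fl l0]] := in_lp_fin fp.
have l1_gt0 : (0 < l + 1)%R by rewrite ltr_wpDl.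
pose c : C := ((l + 1)^-1)%:C%C.
have cfp : in_lp p (fun i => (c * f i)%R) by apply: in_lpZ.
have cf1 : lpnorm p (fun i => (c * f i)%R) <= 1.
  apply: (le_trans (lpnormZ_le _ _ p1)); rewrite fl /c normc_real -EFinM lee_fin.
  by rewrite gtr0_norm ?invr_gt0 // mulrC ler_pdivrMr // mul1r lerDl.
have -> : A f = (fun i => ((l + 1)%:C%C * A (fun i => c * f i) i)%R).
  apply/funext => i; rewrite AZ // mulrA /c -rmorphM /= mulfV ?mul1r //.
  exact: lt0r_neq0.
apply: in_lpZ => //; apply: le_lt_trans (AK _ cf1) _; exact: ltry.
Qed.

Lemma bounded_op_of_opsub (I : choiceType) p (B B' : (I -> C) -> (I -> C)) :
  1 <= p -> bounded_op p B ->
  (forall f g, in_lp p f -> in_lp p g ->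
     B' (fun i => f i + g i)%R = (fun i => B' f i + B' g i)%R) ->
  (forall c f, in_lp p f -> B' (fun i => c * f i)%R = (fun i => c * B' f i)%R) ->
  opnorm p (opsub B B') < +oo -> bounded_op p B'.
Proof.
move=> p1 [_ _ _ Bfin] B'D B'Z BB'fin.
pose b := Num.max (fine (opnorm p B)) (fine (opnorm p (opsub B B'))).
have opnorm_le_b (A : (I -> C) -> (I -> C)) : opnorm p A < +oo ->
    forall f, lpnorm p f <= 1 -> lpnorm p (A f) <= (fine (opnorm p A))%:E.
  move=> Afin f f1; rewrite fineK ?ge0_fin_numE ?opnorm_ge0 //.
  exact: lpnorm_le_opnorm.
have [|K HK] := @lpnormB_ubound I p b p1.
  by rewrite le_max fine_ge0 ?opnorm_ge0.
have B'K f : lpnorm p f <= 1 -> lpnorm p (B' f) <= (Num.max K 0)%:E.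
  move=> f1; have -> : B' f = (fun i => B f i - opsub B B' f i)%R.
    by apply/funext => i; rewrite /opsub subKr.
  apply: le_trans (HK _ _ _ _) _; rewrite ?lee_fin ?le_max ?lexx //.
  - by apply: le_trans (opnorm_le_b _ Bfin _ f1) _; rewrite lee_fin le_max lexx.
  - apply: le_trans (opnorm_le_b _ BB'fin _ f1) _.
    by rewrite lee_fin le_max lexx orbT.
split => //; first exact: in_lp_of_ubound p1 B'Z B'K.
by apply: le_lt_trans (opnorm_le _ B'K) (ltry _); rewrite le_max lexx orbT.
Qed.

End OpNorm.

Section Transport.
Variables (I J : choiceType) (p : \bar R).
Variables (T : (I -> C) -> (J -> C)) (S : (J -> C) -> (I -> C)).
Hypotheses (TK : cancel S T) (SK : cancel T S).
Hypothesis T_lpnorm : forall f, lpnorm p (T f) = lpnorm p f.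
Hypothesis T_add : forall f g, T (fun i => f i + g i) = (fun j => T f j + T g j).
Hypothesis T_scale : forall c f, T (fun i => c * f i) = (fun j => c * T f j).

Lemma S_lpnorm g : lpnorm p (S g) = lpnorm p g.
Proof. by rewrite -T_lpnorm TK. Qed.

Lemma S_add f g : S (fun j => f j + g j) = (fun i => S f i + S g i).
Proof. by rewrite -[in LHS](TK f) -[in LHS](TK g) -T_add SK. Qed.

Lemma S_scale c f : S (fun j => c * f j) = (fun i => c * S f i).
Proof. by rewrite -[in LHS](TK f) -T_scale SK. Qed.

Lemma T_sub f g : T (fun i => f i - g i) = (fun j => T f j - T g j).
Proof.
have -> : (fun i => f i - g i) = (fun i => f i + (fun i => -1 * g i) i).
  by apply/funext => i; rewrite mulN1r.
by rewrite T_add T_scale; apply/funext => j; rewrite mulN1r.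
Qed.

Definition conj_op (A : (I -> C) -> (I -> C)) : (J -> C) -> (J -> C) :=
  fun g => T (A (S g)).

Lemma conj_op_opsub A B : conj_op (opsub A B) = opsub (conj_op A) (conj_op B).
Proof. by apply/funext => g; rewrite /conj_op /opsub T_sub. Qed.

Lemma opnorm_conj_op A : opnorm p (conj_op A) = opnorm p A.
Proof.
rewrite /opnorm; congr ereal_sup; congr setU; apply/seteqP; split.
  move=> _ [g /= g1 <-]; exists (S g); first by rewrite /= S_lpnorm.
  by rewrite /conj_op T_lpnorm.
move=> _ [f /= f1 <-]; exists (T f); first by rewrite /= T_lpnorm.
by rewrite /conj_op SK T_lpnorm.
Qed.

Lemma bounded_op_conj_op A : bounded_op p A -> bounded_op p (conj_op A).
Proof.
have S_lp g : in_lp p g -> in_lp p (S g) by rewrite /in_lp S_lpnorm.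
case=> AD AZ Alp Afin; split.
- by move=> f g fp gp; rewrite /conj_op S_add AD ?T_add //; apply: S_lp.
- by move=> c f fp; rewrite /conj_op S_scale AZ ?T_scale //; apply: S_lp.
- by move=> f fp; rewrite /in_lp /conj_op T_lpnorm; apply/Alp/S_lp.
- by rewrite opnorm_conj_op.
Qed.

End Transport.

Section Orbits.
Variables (n N : nat) (X : countType) (rho : X -> X -> R)
  (act : Zn n -> X -> X) (reps : 'I_N -> X).
Hypothesis act_periodic : periodic_action rho act.
Hypothesis reps_orbits : orbit_reps act reps.

Local Notation U := (@Uop R n N X act reps).
Local Notation U' := (@Uinv R n N X act reps).
Local Notation Phi := (@conjU R n N X act reps).

Definition orbit_point (q : Zn n * 'I_N) : X := act q.1 (reps q.2).

Lemma act_oppK c : cancel (act c) (act (- c)).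
Proof. by case: act_periodic => act0 actD _ _ y; rewrite -actD addNr act0. Qed.

Lemma orbit_decomp x : exists a i, x = act a (reps i).
Proof. by case: reps_orbits => cover _; have [a [i <-]] := cover x; exists a, i. Qed.

Lemma act_reps_inj a b i j : act a (reps i) = act b (reps j) -> a = b /\ i = j.
Proof.
case: act_periodic => _ actD _ free; case: reps_orbits => _ reps_sep.
move=> eq_ab; have shift_ij : act (- b + a) (reps i) = reps j.
  by rewrite actD eq_ab act_oppK.
have ij := reps_sep _ _ _ shift_ij; split => //; subst j.
by have /eqP := free _ _ shift_ij; rewrite addrC subr_eq0 => /eqP.
Qed.

Lemma orbit_point_inj : injective orbit_point.
Proof. by move=> [a i] [b j]; rewrite /orbit_point /= => /act_reps_inj[-> ->]. Qed.

Lemma orbit_point_bij : set_bij setT setT orbit_point.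
Proof.
split=> [q _ //|q q' _ _ /orbit_point_inj //|x _].
by have [a [i ->]] := orbit_decomp x; exists (a, i).
Qed.

Lemma rho_act_shift a b i j :
  rho (act a (reps i)) (act b (reps j)) = rho (act (- b + a) (reps i)) (reps j).
Proof. by case: act_periodic => _ actD rho_act _; rewrite -(rho_act (- b)) act_oppK actD. Qed.

Lemma Uinv_act g a i : U' g (act a (reps i)) = g (a, i).
Proof.
rewrite /Uinv; case: pselect => [ex|[]]; last by exists (a, i).
by case: cid => [[b j]] /= /act_reps_inj[-> ->].
Qed.

Lemma UinvK : cancel U' U.
Proof. by move=> g; apply/funext => -[a i]; rewrite /Uop Uinv_act. Qed.

Lemma UopK : cancel U U'.
Proof. by move=> f; apply/funext => x; have [a [i ->]] := orbit_decomp x; rewrite Uinv_act. Qed.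

Lemma Uop_lpnorm p f : lpnorm p (U f) = lpnorm p f.
Proof. exact: (lpnorm_reindex _ _ orbit_point_bij). Qed.

Lemma Uinv_lpnorm p g : lpnorm p (U' g) = lpnorm p g.
Proof. exact: (S_lpnorm UinvK (Uop_lpnorm p)). Qed.

Lemma Uinv_add f g : U' (fun q => f q + g q) = (fun x => U' f x + U' g x).
Proof. exact: (S_add UinvK UopK (fun f g => erefl)). Qed.

Lemma Uinv_scale c f : U' (fun q => c * f q) = (fun x => c * U' f x).
Proof. exact: (S_scale UinvK UopK (fun c f => erefl)). Qed.

Lemma bounded_op_conjU p A : bounded_op p A -> bounded_op p (Phi A).
Proof. exact: (bounded_op_conj_op UinvK UopK (Uop_lpnorm p) (fun f g => erefl)). Qed.

Lemma opnorm_conjU p A : opnorm p (Phi A) = opnorm p A.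
Proof. exact: (opnorm_conj_op UinvK UopK (Uop_lpnorm p)). Qed.

Definition conjUinv (B : (Zn n * 'I_N -> C) -> (Zn n * 'I_N -> C)) : (X -> C) -> (X -> C) :=
  conj_op U' U B.

Lemma bounded_op_conjUinv p B : bounded_op p B -> bounded_op p (conjUinv B).
Proof. exact: (bounded_op_conj_op UopK UinvK (Uinv_lpnorm p) Uinv_add Uinv_scale). Qed.

Lemma opnorm_conjUinv p B : opnorm p (conjUinv B) = opnorm p B.
Proof. exact: (opnorm_conj_op UopK UinvK (Uinv_lpnorm p)). Qed.

Lemma conjU_opsub A A' : Phi (opsub A A') = opsub (Phi A) (Phi A').
Proof. by []. Qed.

Lemma conjUinv_opsub B B' : conjUinv (opsub B B') = opsub (conjUinv B) (conjUinv B').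
Proof. by apply: (conj_op_opsub U); [exact: Uinv_add | exact: Uinv_scale]. Qed.

Lemma conjUK B g : Phi (conjUinv B) g = B g.
Proof. by rewrite /conjU /conjUinv /conj_op !UinvK. Qed.

Lemma fsum_box_orbit m al (G : X -> C) :
  \sum_(g \in @box n m) \sum_(j < N) G (act (al - g) (reps j)) =
  \sum_(y \in (fun q => act (al - q.1) (reps q.2)) @` (@box n m `*` setT)) G y.
Proof.
rewrite fsbig_image; last first.
  by move=> [g i] [g' j] _ _ /= /act_reps_inj[/(addrI al)/oppr_inj -> ->].
under [LHS]eq_fsbigr do rewrite big_fsbigT.
by rewrite pair_fsbig //; [exact: box_finite | exact: finite_finset].
Qed.

Lemma band_box (r : R) : is_metric rho -> balls_finite rho ->
  exists m, forall g i j, rho (act g (reps i)) (reps j) <= r -> @box n m g.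
Proof.
case=> _ _ rho_sym _ balls_fin.
pose B := \bigcup_(j in [set: 'I_N]) [set y | rho (reps j) y <= r].
have B_fin : finite_set B by apply: bigcup_finite => // j _; exact: balls_fin.
have [m Hm] : exists m, fst @` (orbit_point @^-1` B) `<=` @box n m.
  apply/finite_subset_box/finite_image/finite_preimage => //.
  by move=> q q' _ _ /orbit_point_inj.
exists m => g i j gij.
by apply: Hm; exists (g, i) => //; exists j => //=; rewrite rho_sym.
Qed.

Lemma band_op_Z_conjU p A : is_metric rho -> balls_finite rho ->
  band_op_X rho p A -> band_op_Z p (Phi A).
Proof.
move=> rho_metric balls_fin [_ [k [M [r [k_bd k_band AE]]]]].
have [m m_box] := band_box r rho_metric balls_fin.
exists m, (fun g al => \matrix_(i, j) k (act al (reps i)) (act (al - g) (reps j))).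
split=> [g|u up]; first by exists M => x i j; rewrite mxE.
rewrite /conjU AE /in_lp ?Uinv_lpnorm //; apply/funext => -[al i]; rewrite /Uop /=.
set x := act al (reps i); pose G y := k x y * U' u y.
rewrite (eq_fsbigr (fun g => \sum_(j < N) G (act (al - g) (reps j)))); last first.
  by move=> g _; apply: eq_bigr => j _; rewrite mxE /G Uinv_act.
rewrite fsum_box_orbit; apply: eq_fsbigl_supp => y.
  have [b [j ->]] := orbit_decomp y => xy []; exists (- b + al, j).
    by split=> //; apply: (m_box _ i j); rewrite -rho_act_shift.
  by rewrite /= opprD opprK addrCA subrr addr0.
move=> [[g j] [g_box _] <-] far; rewrite /G k_band ?mul0r // ltNge; exact/negP.
Qed.

Lemma box_rho_ubound m :
  exists r, forall g, @box n m g -> forall i j, rho (act g (reps i)) (reps j) <= r.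
Proof.
pose d g (t : 'I_N * 'I_N) := rho (act g (reps t.1)) (reps t.2).
have [|r Hr] := @finite_set_ubound _ R _ _ 0 (@box n m) d (box_finite n m).
  by move=> g _; exists (\big[Num.max/0]_t d g t) => t; exact: le_bigmax.
by exists r => g gm i j; exact: (Hr g gm (i, j)).
Qed.

Lemma band_op_X_conjUinv p B : bounded_op p B -> band_op_Z p B ->
  band_op_X rho p (conjUinv B).
Proof.
move=> Bb [m [a [a_bd BE]]]; split; first exact: bounded_op_conjUinv.
have [|M a_le] := @finite_set_ubound _ R _ (Zn n * 'I_N * 'I_N)%type 0 (@box n m)
  (fun g t => normc (a g t.1.1 t.1.2 t.2)) (box_finite n m).
  by move=> g _; have [M HM] := a_bd g; exists M => -[[x i] j]; exact: HM.
have [r r_bd] := box_rho_ubound m.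
pose K (q q' : Zn n * 'I_N) :=
  if pselect (@box n m (q.1 - q'.1)) then a (q.1 - q'.1) q.1 q.2 q'.2 else 0.
(* [K] pulled back to [X * X] along [orbit_point] in both arguments *)
pose k x y := U' (fun q => U' (fun q' => K q q') y) x.
have kE al i b j : k (act al (reps i)) (act b (reps j)) = K (al, i) (b, j).
  by rewrite /k !Uinv_act.
exists k, (Num.max M 0), r; split.
- move=> x y; have [al [i ->]] := orbit_decomp x; have [b [j ->]] := orbit_decomp y.
  rewrite kE /K; case: pselect => ab_box; last by rewrite Normc.normc0 le_max lexx orbT.
  by rewrite le_max (a_le _ ab_box ((al, i), j)).
- move=> x y; have [al [i ->]] := orbit_decomp x; have [b [j ->]] := orbit_decomp y.
  by rewrite kE /K; case: pselect => //= ab_box; rewrite rho_act_shift addrC ltNge r_bd.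
move=> u up; rewrite /conjUinv /conj_op BE /in_lp ?Uop_lpnorm //.
apply/funext => x; have [al [i ->]] := orbit_decomp x; rewrite Uinv_act /=.
set x0 := act al (reps i); pose G y := k x0 y * u y.
rewrite (eq_fsbigr (fun g => \sum_(j < N) G (act (al - g) (reps j)))); last first.
  move=> g /set_mem g_box; apply: eq_bigr => j _; rewrite /G /x0 kE /K /= subKr.
  by case: pselect.
rewrite fsum_box_orbit; apply: eq_fsbigl_supp => y.
  move=> [[g j] [g_box _] <-] []; rewrite /= rho_act_shift opprB subrK.
  exact: r_bd.
move=> _; have [b [j ->]] := orbit_decomp y => not_img.
rewrite /G /x0 kE /K /=; case: pselect => ab_box; last by rewrite mul0r.
by case: not_img; exists (al - b, j) => //=; rewrite subKr.
Qed.

End Orbits.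

Section BandOpZ.
Variables (n N : nat) (p : \bar R).
Hypothesis p_ge1 : (1 <= p)%E.

Lemma band_op_Z_add B : band_op_Z p B -> forall f g : Zn n * 'I_N -> C,
  in_lp p f -> in_lp p g -> B (fun q => f q + g q) = (fun q => B f q + B g q).
Proof.
move=> [m [a [_ BE]]] f g fp gp; rewrite !BE //; last exact: in_lpD.
apply/funext => q; rewrite -fsbig_split; last exact: box_finite.
apply: eq_fsbigr => al _; rewrite -big_split; apply: eq_bigr => j _.
by rewrite /= mulrDr.
Qed.

Lemma band_op_Z_scale B : band_op_Z p B -> forall c (f : Zn n * 'I_N -> C),
  in_lp p f -> B (fun q => c * f q) = (fun q => c * B f q).
Proof.
move=> [m [a [_ BE]]] c f fp; rewrite !BE //; last exact: in_lpZ.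
apply/funext => q; rewrite mulr_fsumr; apply: eq_fsbigr => al _.
by rewrite big_distrr; apply: eq_bigr => j _; rewrite /= mulrCA.
Qed.

End BandOpZ.
End Operators.

Theorem proposition3p2 (R : realType) (n N : nat) (X : countType)
  (rho : X -> X -> R) (act : Zn n -> X -> X) (reps : 'I_N -> X) (p : \bar R) :
  is_metric rho -> balls_finite rho ->
  periodic_action rho act -> orbit_reps act reps ->
  (1 <= p)%E ->
  let Phi := @conjU R n N X act reps in
  [/\
    (forall A, Ap_X rho p A -> @Ap_Z R n N p (Phi A)),
    (forall B, @Ap_Z R n N p B ->
       exists A, Ap_X rho p A /\ (forall g, in_lp p g -> Phi A g = B g)),
    (forall A A', Ap_X rho p A -> Ap_X rho p A' ->
       (forall g, in_lp p g -> Phi A g = Phi A' g) ->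
       forall f, in_lp p f -> A f = A' f),
    [/\ (forall A A' f, in_lp p f ->
           Phi (fun u x => A u x + A' u x) f = (fun y => Phi A f y + Phi A' f y)),
        (forall (c : R[i]) A f, in_lp p f ->
           Phi (fun u x => c * A u x) f = (fun y => c * Phi A f y)),
        (forall A A' f, in_lp p f -> Phi (fun u => A (A' u)) f = Phi A (Phi A' f)) &
        (forall f, in_lp p f -> Phi (fun u => u) f = f)] &
    exists c : R, 0 < c /\
      forall A, Ap_X rho p A ->
        (opnorm p (Phi A) <= c%:E * opnorm p A)%E /\
        (opnorm p A <= c%:E * opnorm p (Phi A))%E].
Proof.
move=> rho_metric balls_fin act_per reps_orb p_ge1 Phi.
have UK := UopK act_per reps_orb; have UiK := UinvK act_per reps_orb.
split.
- move=> A [A_bd A_approx]; split; first exact: (bounded_op_conjU act_per reps_orb A_bd).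
  move=> eps eps_gt0; have [B [B_band AB_eps]] := A_approx eps eps_gt0.
  exists (Phi B); split.
    exact: (band_op_Z_conjU act_per reps_orb rho_metric balls_fin B_band).
  by rewrite -conjU_opsub (opnorm_conjU act_per reps_orb).
- move=> B [B_bd B_approx]; exists (conjUinv act reps B).
  split=> [|g _]; last exact: (conjUK act_per reps_orb).
  split=> [|eps eps_gt0]; first exact: (bounded_op_conjUinv act_per reps_orb B_bd).
  have [B' [B'_band BB'_eps]] := B_approx eps eps_gt0.
  (* band operators on Z^n are not assumed bounded; [B'] is, being close to [B] *)
  have B'_bd : bounded_op p B'.
    apply: bounded_op_of_opsub p_ge1 B_bd (band_op_Z_add p_ge1 B'_band)
      (band_op_Z_scale p_ge1 B'_band) (lt_le_trans BB'_eps (leey _)).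
  exists (conjUinv act reps B'); split.
    exact: (band_op_X_conjUinv act_per reps_orb B'_bd B'_band).
  by rewrite -(conjUinv_opsub act_per reps_orb) (opnorm_conjUinv act_per reps_orb).
- move=> A A' _ _ eq_Phi f fp.
  have := eq_Phi (Uop act reps f); rewrite /Phi /conjU UK => eq_U.
  by rewrite -[A f]UK eq_U ?UK // /in_lp (Uop_lpnorm act_per reps_orb).
- split=> //.
    by move=> A A' f _; rewrite /Phi /conjU UK.
  by move=> f _; rewrite /Phi /conjU UiK.
- by exists 1; split=> // A _; rewrite (opnorm_conjU act_per reps_orb) mul1e.
Qed.
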